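(* In the universal enveloping algebra $U(gl(m|n+1))$, the elements $\tau_k=(\mathcal B^k)^{N}_{\ N}$, $k=1,2,3,\dots$, pairwise commute: $[\tau_\ell,\tau_k]=0$ for all $\ell,k$.
   Context: Over $\mathbb{C}$, $N=m+n+1$, parity $(p)=0$ for $1\le p\le m$ and $(p)=1$ for $m<p\le N$. $gl(m|n+1)$ has homogeneous basis $E_{pq}$ ($1\le p,q\le N$) of parity $(p)+(q)$ with graded bracket $[E_{pq},E_{rs}]=\delta_{qr}E_{ps}-(-1)^{((p)+(q))((r)+(s))}\delta_{ps}E_{rq}$. $\mathcal B$ is the $N\times N$ matrix with entries $\mathcal B^p_{\ q}=(-1)^{(p)}E_{pq}\in U(gl(m|n+1))$, and its powers are defined recursively by $(\mathcal B^k)^p_{\ q}=\sum_{r=1}^N\mathcal B^p_{\ r}(\mathcal B^{k-1})^r_{\ q}$, $(\mathcal B^0)^p_{\ q}=\delta_{pq}$. The $\tau_k$ are even elements, so $[\ ,\ ]$ is the ordinary commutator. *)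

From HB Require Import structures.
From mathcomp Require Import all_boot all_order all_algebra.
From mathcomp Require Import complex.
From mathcomp Require Import reals.
Set Implicit Arguments. Unset Strict Implicit. Unset Printing Implicit Defensive.
Import GRing.Theory.
Local Open Scope ring_scope.

(* Indices 1..N of the paper are 'I_N = {0,..,N-1} here, N = m+n+1.
   Paper index p (1-based) corresponds to i = p-1; parity (p)=0 iff p <= m,
   i.e. parity i = (m <= i). *)
Definition par (m n : nat) (i : 'I_(m + n).+1) : nat := (m <= i)%N.

Definition ssign (R : pzRingType) (m n : nat) (p q r s : 'I_(m + n).+1) : R :=
  (-1) ^+ ((par p + par q) * (par r + par s))%N.

(* U(gl(m|n+1)) over C is the universal (initial) C-algebra with such e. *)
Definition gl_super_rel (K : pzRingType) (A : algType K) (m n : nat)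
    (e : 'I_(m + n).+1 -> 'I_(m + n).+1 -> A) : Prop :=
  forall p q r s : 'I_(m + n).+1,
    e p q * e r s - ssign A p q r s * (e r s * e p q)
    = (q == r)%:R * e p s - ssign A p q r s * ((p == s)%:R * e r q).

Definition Bmat (K : pzRingType) (A : algType K) (m n : nat)
    (e : 'I_(m + n).+1 -> 'I_(m + n).+1 -> A) : 'M[A]_((m + n).+1) :=
  \matrix_(p, q) ((-1) ^+ par p * e p q).

Definition tau (K : pzRingType) (A : algType K) (m n : nat)
    (e : 'I_(m + n).+1 -> 'I_(m + n).+1 -> A) (k : nat) : A :=
  ((Bmat e) ^+ k) ord_max ord_max.

From HB Require Import structures.
From mathcomp Require Import all_boot all_order all_algebra.
From mathcomp Require Import complex.
From mathcomp Require Import reals.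
From mathcomp Require Import ring zify.
Set Implicit Arguments. Unset Strict Implicit. Unset Printing Implicit Defensive.
Import GRing.Theory.
Local Open Scope ring_scope.

(* The entries of B super-commute with the entries of every power of B up to
   the same correction terms as for B itself (Bmat_pow_comm).  Iterating this
   gives the commutation formula pow_pow_comm:
     (B^l)_ij (B^(k+1))_ab = +-(B^(k+1))_ab (B^l)_ij
       +- sum_(c<l) ((B^c)_aj (B^(l+k-c))_ib - (B^(l+k-c))_aj (B^c)_ib).
   On a diagonal index i = j = a = b the sign in front of the first term is +1
   and every summand is a commutator of diagonal entries of total degree l+k,
   so induction on the total degree shows that all (B^l)_ii commute; tau_k is
   the case i = N. *)

Section MatrixPowers.
Variables (R : pzRingType) (d : nat) (M : 'M[R]_d.+1).

Lemma mxpowSl k a b : (M ^+ k.+1) a b = \sum_r M a r * (M ^+ k) r b.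
Proof. by rewrite exprS -mulmxE mxE. Qed.

Lemma mxpowSr k a b : (M ^+ k.+1) a b = \sum_r (M ^+ k) a r * M r b.
Proof. by rewrite exprSr -mulmxE mxE. Qed.

Lemma mxpowD_sum k l a b : \sum_r (M ^+ k) a r * (M ^+ l) r b = (M ^+ (k + l)) a b.
Proof. by rewrite exprD -mulmxE mxE. Qed.

End MatrixPowers.

Section SuperCommutation.
Variables (K : comNzRingType) (A : algType K) (m n : nat).
Local Notation I := 'I_(m + n).+1.
Variable e : I -> I -> A.
Hypothesis gl_e : gl_super_rel e.
Local Notation B := (Bmat e).

Definition odd_index (i : I) : bool := (m <= i)%N.
Definition sgn (b : bool) : K := (-1) ^+ b.
Definition index_sgn (p : I) : K := sgn (odd_index p).
Definition pair_sgn (p q a b : I) : K :=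
  sgn ((odd_index p (+) odd_index q) && (odd_index a (+) odd_index b)).
Definition triple_sgn (i j a : I) : K :=
  sgn ((odd_index i && odd_index j) (+) (odd_index i && odd_index a)
       (+) (odd_index j && odd_index a)).
Definition delta (p q : I) : K := (p == q)%:R.

Lemma sgnD x y : sgn x * sgn y = sgn (x (+) y).
Proof. by case: x; case: y; rewrite /sgn /= ?expr0 ?expr1 ?mulrNN ?mulr1 ?mul1r. Qed.

Ltac sgn_cases :=
  rewrite /pair_sgn /triple_sgn /index_sgn ?sgnD; congr sgn;
  (repeat match goal with |- context [odd_index ?x] => case: (odd_index x) end); done.

Lemma pair_sgnK p q a b : pair_sgn p q a b * pair_sgn p q a b = 1.
Proof. by rewrite sgnD addbb. Qed.

Lemma pair_sgn_deltal p q a b : pair_sgn p q a b * delta p q = delta p q.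
Proof.
by rewrite /delta; case: eqP => [->|]; rewrite ?mulr0 // /pair_sgn addbb mul1r.
Qed.

Lemma pair_sgn_deltar p q a b : pair_sgn p q a b * delta a b = delta a b.
Proof.
by rewrite /delta; case: eqP => [->|]; rewrite ?mulr0 // /pair_sgn addbb andbF mul1r.
Qed.

Lemma pair_sgn_transr p q a r b : pair_sgn p q a r * pair_sgn p q r b = pair_sgn p q a b.
Proof. by sgn_cases. Qed.

Lemma pair_sgn_transl p i j a b : pair_sgn p j a b * pair_sgn i p a b = pair_sgn i j a b.
Proof. by sgn_cases. Qed.

Lemma deltaC p q : delta p q = delta q p.
Proof. by rewrite /delta eq_sym. Qed.

Lemma delta_subst p q (f : I -> K) : delta p q * f p = delta p q * f q.
Proof. by rewrite /delta; case: eqP => [->|]; rewrite ?mul0r. Qed.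

Lemma sum_delta x (c : I -> K) (F : I -> A) : \sum_r (delta x r * c r) *: F r = c x *: F x.
Proof.
rewrite (bigD1 x) //= big1 ?addr0; first by rewrite /delta eqxx mul1r.
by move=> r /negbTE; rewrite /delta eq_sym => ->; rewrite mul0r scale0r.
Qed.

Lemma sign_mulr k (x : A) : (-1) ^+ k * x = ((-1) ^+ k : K) *: x.
Proof.
rewrite -signr_odd -[((-1) ^+ k : K)]signr_odd.
by case: odd; rewrite ?expr0 ?expr1 ?mul1r ?scale1r ?mulN1r ?scaleN1r.
Qed.

Lemma ssign_mulr p q a b (x : A) : ssign A p q a b * x = pair_sgn p q a b *: x.
Proof.
rewrite /ssign sign_mulr /pair_sgn /sgn -signr_odd; congr (_ ^+ _ *: _).
rewrite /par -/(odd_index p) -/(odd_index q) -/(odd_index a) -/(odd_index b).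
by case: (odd_index p); case: (odd_index q); case: (odd_index a); case: (odd_index b).
Qed.

Lemma BmatE p q : B p q = index_sgn p *: e p q.
Proof. by rewrite mxE sign_mulr. Qed.

Lemma Bmat_pow0 a b : (B ^+ 0) a b = delta a b *: 1.
Proof. by rewrite expr0 mxE /delta scaler_nat. Qed.

Lemma Bmat_comm p q a b : B p q * B a b =
  pair_sgn p q a b *: (B a b * B p q) + (delta q a * index_sgn q) *: B p b
  - (pair_sgn p q a b * delta p b * index_sgn p) *: B a q.
Proof.
have rel_e := gl_e p q a b.
rewrite !ssign_mulr !mulr_natl -!scaler_nat -/(delta q a) -/(delta p b) in rel_e.
move/eqP: rel_e; rewrite subr_eq => /eqP rel_e.
rewrite !BmatE -!scalerAl -!scalerAr !scalerA rel_e !scalerDr ?scalerN !scalerA.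
have -> : index_sgn p * index_sgn a * delta q a = delta q a * index_sgn q * index_sgn p.
  by rewrite mulrC mulrA (delta_subst q a index_sgn); ring.
have -> : index_sgn p * index_sgn a * pair_sgn p q a b * delta p b
    = pair_sgn p q a b * delta p b * index_sgn p * index_sgn a by ring.
have -> : index_sgn p * index_sgn a * pair_sgn p q a b
    = pair_sgn p q a b * index_sgn a * index_sgn p by ring.
by rewrite addrC addrA.
Qed.

Lemma Bmat_pow_comm k p q a b : B p q * (B ^+ k) a b =
  pair_sgn p q a b *: ((B ^+ k) a b * B p q) + (delta q a * index_sgn q) *: (B ^+ k) p b
  - (pair_sgn p q a b * delta p b * index_sgn p) *: (B ^+ k) a q.
Proof.
elim: k p q a b => [|k IH] p q a b.
  rewrite !Bmat_pow0 -!scalerAr -!scalerAl !scalerA mulr1 mul1r pair_sgn_deltar.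
  have -> : pair_sgn p q a b * delta p b * index_sgn p * delta a q
      = delta q a * index_sgn q * delta p b.
    rewrite /delta; case: (eqVneq q a) => [->|]; case: (eqVneq p b) => [->|] //=;
      rewrite ?mulr0 ?mul0r ?mulr1 //.
    by rewrite mul1r; sgn_cases.
  by rewrite addrK.
have expand r : B p q * B a r * (B ^+ k) r b =
    (pair_sgn p q a r * pair_sgn p q r b) *: (B a r * ((B ^+ k) r b * B p q))
  + (pair_sgn p q a r * delta q r * index_sgn q) *: (B a r * (B ^+ k) p b)
  - (pair_sgn p q a r * pair_sgn p q r b * delta p b * index_sgn p) *: (B a r * (B ^+ k) r q)
  + (delta q a * index_sgn q) *: (B p r * (B ^+ k) r b)
  - (pair_sgn p q a r * delta p r * index_sgn p) *: (B a q * (B ^+ k) r b).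
  rewrite Bmat_comm !mulrDl !mulNr -!scalerAl -[B a r * B p q * _]mulrA (IH p q r b).
  by rewrite !mulrDr !mulrN -!scalerAr !scalerDr ?scalerN !scalerA !mulrA.
rewrite [in LHS]mxpowSl mulr_sumr (eq_bigr _ (fun r _ => etrans (mulrA _ _ _) (expand r))).
rewrite ?sumrB ?big_split ?sumrB ?big_split /= sumrN.
have -> : \sum_r (pair_sgn p q a r * pair_sgn p q r b) *: (B a r * ((B ^+ k) r b * B p q))
    = pair_sgn p q a b *: ((B ^+ k.+1) a b * B p q).
  rewrite mxpowSl mulr_suml scaler_sumr.
  by apply: eq_bigr => r _; rewrite pair_sgn_transr mulrA.
have -> : \sum_r (pair_sgn p q a r * delta q r * index_sgn q) *: (B a r * (B ^+ k) p b)
    = (pair_sgn p q a q * index_sgn q) *: (B a q * (B ^+ k) p b).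
  rewrite -(sum_delta q (fun r => pair_sgn p q a r * index_sgn q) (fun r => B a r * _)).
  apply: eq_bigr => r _; congr (_ *: _); ring.
have -> : \sum_r (pair_sgn p q a r * pair_sgn p q r b * delta p b * index_sgn p)
      *: (B a r * (B ^+ k) r q)
    = (pair_sgn p q a b * delta p b * index_sgn p) *: (B ^+ k.+1) a q.
  rewrite mxpowSl scaler_sumr.
  by apply: eq_bigr => r _; rewrite pair_sgn_transr.
have -> : \sum_r (delta q a * index_sgn q) *: (B p r * (B ^+ k) r b)
    = (delta q a * index_sgn q) *: (B ^+ k.+1) p b by rewrite mxpowSl scaler_sumr.
have -> : \sum_r (pair_sgn p q a r * delta p r * index_sgn p) *: (B a q * (B ^+ k) r b)
    = (pair_sgn p q a q * index_sgn q) *: (B a q * (B ^+ k) p b).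
  have -> : pair_sgn p q a q * index_sgn q = pair_sgn p q a p * index_sgn p by sgn_cases.
  rewrite -(sum_delta p (fun r => pair_sgn p q a r * index_sgn p) (fun r => B a q * (B ^+ k) r b)).
  apply: eq_bigr => r _; congr (_ *: _); ring.
set y := _ *: (B a q * _); set x := _ *: (_ * B p q); set z := _ *: (B ^+ k.+1) p b.
by rewrite addrAC (addrAC x y z) (addrAC (x + z + y)) addrK.
Qed.

Lemma pow_Bmat_comm k p j i b : (B ^+ k) i b * B p j =
  pair_sgn p j i b *: (B p j * (B ^+ k) i b)
  - (pair_sgn p j i b * delta j i * index_sgn j) *: (B ^+ k) p b
  + (delta p b * index_sgn p) *: (B ^+ k) i j.
Proof.
rewrite Bmat_pow_comm !scalerDr !scalerN !scalerA pair_sgnK scale1r !mulrA pair_sgnK mul1r.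
set x := _ * B p j; set y := _ *: (B ^+ k) p b; set z := _ *: (B ^+ k) i j.
by rewrite (addrAC x y) addrK subrK.
Qed.

Lemma sum_pow_pow_Bmat x y i j a b :
  \sum_p (pair_sgn p j a b * triple_sgn i p a) *: ((B ^+ x) a p * (B ^+ y) i b * B p j)
  = triple_sgn i j a *: ((B ^+ x.+1) a j * (B ^+ y) i b)
  - (triple_sgn i j a * delta j i * index_sgn j) *: (B ^+ (x + y)) a b
  + (pair_sgn b j a b * triple_sgn i b a * index_sgn b) *: ((B ^+ x) a b * (B ^+ y) i j).
Proof.
have sgn_ij p : pair_sgn p j a b * triple_sgn i p a * pair_sgn p j i b = triple_sgn i j a.
  by sgn_cases.
have expand p :
    (pair_sgn p j a b * triple_sgn i p a) *: ((B ^+ x) a p * (B ^+ y) i b * B p j)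
  = triple_sgn i j a *: ((B ^+ x) a p * B p j * (B ^+ y) i b)
  - (triple_sgn i j a * delta j i * index_sgn j) *: ((B ^+ x) a p * (B ^+ y) p b)
  + (delta b p * (pair_sgn p j a b * triple_sgn i p a * index_sgn p))
    *: ((B ^+ x) a p * (B ^+ y) i j).
  rewrite -mulrA pow_Bmat_comm !mulrDr !mulrN -!scalerAr.
  rewrite !scalerDr !scalerN !scalerA !mulrA sgn_ij.
  by congr (_ + _ *: _); rewrite deltaC; ring.
rewrite (eq_bigr _ (fun p _ => expand p)) big_split sumrB /=.
rewrite -!scaler_sumr -mulr_suml -mxpowSr mxpowD_sum.
by rewrite (sum_delta b (fun p => _ * triple_sgn i p a * index_sgn p) (fun p => _ * _)).
Qed.

Lemma sum_pow_pow_Bmat_sub x y i j a b :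
  \sum_p ((pair_sgn p j a b * triple_sgn i p a) *: ((B ^+ x) a p * (B ^+ y) i b * B p j)
        - (pair_sgn p j a b * triple_sgn i p a) *: ((B ^+ y) a p * (B ^+ x) i b * B p j))
  = triple_sgn i j a *: ((B ^+ x.+1) a j * (B ^+ y) i b - (B ^+ y.+1) a j * (B ^+ x) i b)
  + (pair_sgn b j a b * triple_sgn i b a * index_sgn b)
    *: ((B ^+ x) a b * (B ^+ y) i j - (B ^+ y) a b * (B ^+ x) i j).
Proof.
rewrite sumrB !sum_pow_pow_Bmat (addnC y x) !scalerBr.
set u := _ *: (B ^+ (x + y)) a b; set v := triple_sgn i j a *: (_ * (B ^+ y) i b).
rewrite opprD opprB !addrA; congr (_ + _).
by rewrite (addrAC v (- u)) subrK addrAC.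
Qed.

Lemma Bmat_powS_mul_pow l k i j a b : (B ^+ l.+1) i j * (B ^+ k) a b =
  \sum_p pair_sgn p j a b *: ((B ^+ l) i p * (B ^+ k) a b * B p j)
  + (delta j a * index_sgn j) *: (B ^+ (l + k)) i b
  - (pair_sgn b j a b * index_sgn b) *: ((B ^+ l) i b * (B ^+ k) a j).
Proof.
have expand p : (B ^+ l) i p * B p j * (B ^+ k) a b =
    pair_sgn p j a b *: ((B ^+ l) i p * (B ^+ k) a b * B p j)
  + (delta j a * index_sgn j) *: ((B ^+ l) i p * (B ^+ k) p b)
  - (delta b p * (pair_sgn p j a b * index_sgn p)) *: ((B ^+ l) i p * (B ^+ k) a j).
  rewrite -mulrA Bmat_pow_comm !mulrDr !mulrN -!scalerAr !mulrA.
  by congr (_ - _ *: _); rewrite deltaC; ring.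
rewrite mxpowSr mulr_suml (eq_bigr _ (fun p _ => expand p)) sumrB big_split /=.
rewrite -scaler_sumr mxpowD_sum.
by rewrite (sum_delta b (fun p => pair_sgn p j a b * index_sgn p) (fun p => _ * _)).
Qed.

Lemma sum_pow_mul_pow_recl l k i j a b :
  \sum_(c < l.+1) (B ^+ c) a j * (B ^+ (l.+1 + k - c)) i b =
  delta a j *: (B ^+ (l + k.+1)) i b
  + \sum_(c < l) (B ^+ c.+1) a j * (B ^+ (l + k - c)) i b.
Proof.
rewrite big_ord_recl Bmat_pow0 -scalerAl mul1r subn0 addSnnS; congr (_ + _).
by apply: eq_bigr => c _; rewrite lift0 addnS subSS.
Qed.

Lemma sum_pow_mul_pow_recr l k i j a b :
  \sum_(c < l.+1) (B ^+ (l.+1 + k - c)) a j * (B ^+ c) i b =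
  \sum_(c < l) (B ^+ (l + k - c).+1) a j * (B ^+ c) i b
  + (B ^+ k.+1) a j * (B ^+ l) i b.
Proof.
rewrite big_ord_recr /= addSnnS addKn; congr (_ + _); apply: eq_bigr => c _.
by rewrite addnS subSn // (leq_trans (ltnW (ltn_ord c))) ?leq_addr.
Qed.

Lemma pow_pow_comm l k i j a b : (B ^+ l) i j * (B ^+ k.+1) a b =
  pair_sgn i j a b *: ((B ^+ k.+1) a b * (B ^+ l) i j) + triple_sgn i j a *:
  \sum_(c < l) ((B ^+ c) a j * (B ^+ (l + k - c)) i b
              - (B ^+ (l + k - c)) a j * (B ^+ c) i b).
Proof.
elim: l k i j a b => [|l IH] k i j a b.
  rewrite big_ord0 scaler0 addr0 !Bmat_pow0 -scalerAl -scalerAr mul1r mulr1 scalerA.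
  by rewrite pair_sgn_deltal.
have IH_Bmat p : pair_sgn p j a b *: ((B ^+ l) i p * (B ^+ k.+1) a b * B p j) =
    pair_sgn i j a b *: ((B ^+ k.+1) a b * ((B ^+ l) i p * B p j)) +
    \sum_(c < l) ((pair_sgn p j a b * triple_sgn i p a)
                    *: ((B ^+ c) a p * (B ^+ (l + k - c)) i b * B p j)
                - (pair_sgn p j a b * triple_sgn i p a)
                    *: ((B ^+ (l + k - c)) a p * (B ^+ c) i b * B p j)).
  rewrite IH mulrDl -!scalerAl scalerDr !scalerA pair_sgn_transl mulrA; congr (_ + _).
  rewrite mulr_suml scaler_sumr; apply: eq_bigr => c _.
  by rewrite mulrBl scalerBr.
rewrite Bmat_powS_mul_pow (eq_bigr _ (fun p _ => IH_Bmat p)) big_split /=.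
rewrite -scaler_sumr -mulr_sumr -mxpowSr exchange_big /=.
under eq_bigr => c _ do rewrite sum_pow_pow_Bmat_sub.
rewrite big_split /= -!scaler_sumr.
have -> : (pair_sgn b j a b * triple_sgn i b a * index_sgn b) *:
    \sum_(c < l) ((B ^+ c) a b * (B ^+ (l + k - c)) i j
                 - (B ^+ (l + k - c)) a b * (B ^+ c) i j)
  = (pair_sgn b j a b * index_sgn b) *: ((B ^+ l) i b * (B ^+ k.+1) a j
      - pair_sgn i b a j *: ((B ^+ k.+1) a j * (B ^+ l) i b)).
  by rewrite (IH k i b a j) addrC addKr scalerA; congr (_ *: _); ring.
rewrite [in RHS]sumrB sum_pow_mul_pow_recl sum_pow_mul_pow_recr.
have sgn_b : pair_sgn b j a b * index_sgn b * pair_sgn i b a j = triple_sgn i j a.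
  by sgn_cases.
have delta_ja : delta j a * index_sgn j = triple_sgn i j a * delta a j.
  have sgn_jj : triple_sgn i j j = index_sgn j by sgn_cases.
  by rewrite -sgn_jj deltaC (mulrC (triple_sgn i j a)) (delta_subst a j (triple_sgn i j)).
rewrite scalerBr scalerA sgn_b delta_ja -scalerA.
set x := _ *: (_ * (B ^+ k.+1) a j).
rewrite -!addrA; congr (_ + _).
rewrite (addrCA x) (addrCA x) subrr addr0 -scalerN -!scalerDr; congr (_ *: _).
set D := delta a j *: _; set Y := _ * (B ^+ l) i b.
set SF := \sum_(c < l) _ * (B ^+ (l + k - c)) i b.
set SG := \sum_(c < l) _ * (B ^+ c) i b.
by rewrite sumrB (addrC (- Y) D) (addrCA (SF - SG) D (- Y)) opprD (addrA SF).
Qed.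

Lemma pow_diag_comm i l k : (B ^+ l) i i * (B ^+ k) i i = (B ^+ k) i i * (B ^+ l) i i.
Proof.
have [t] := ubnP (l + k); elim: t l k => // t IH l [|k] lt_lk_t.
  by rewrite Bmat_pow0 -scalerAl -scalerAr mul1r mulr1.
rewrite pow_pow_comm /pair_sgn /sgn addbb expr0 scale1r big1 ?scaler0 ?addr0 //.
move=> c _; apply/eqP; rewrite subr_eq0; apply/eqP/IH.
by have := ltn_ord c; move: lt_lk_t; lia.
Qed.

End SuperCommutation.

Unset Implicit Arguments.
Set Strict Implicit.

Theorem proposition11 (R : realType) (A : algType R[i]) (m n : nat)
    (e : 'I_(m + n).+1 -> 'I_(m + n).+1 -> A) :
  gl_super_rel e ->
  forall l k : nat, (0 < l)%N -> (0 < k)%N ->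
    tau e l * tau e k - tau e k * tau e l = 0.
Proof.
move=> gl_e l k _ _; apply/eqP; rewrite subr_eq0; apply/eqP.
exact: (pow_diag_comm gl_e).
Qed.
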